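(* Let $G$ be a group of order $3^5$ generated by $f_1,\dots,f_5$ with $f_5\in Z(G)$, satisfying the commutator relations $[f_2,f_1]=f_3$, $[f_3,f_1]=f_4$, $[f_4,f_1]=[f_3,f_2]=f_5$, $[f_4,f_2]=[f_4,f_3]=1$, together with one of the following three sets of power relations: (a) $f_1^3=f_4^3=f_5^3=1$, $f_2^3=f_4^{-1}$, $f_3^3=f_5^{-1}$; (b) $f_4^3=f_5^3=1$, $f_1^3=f_5$, $f_2^3=f_4^{-1}$, $f_3^3=f_5^{-1}$; (c) $f_4^3=f_5^3=1$, $f_1^3=f_3^3=f_5^{-1}$, $f_2^3=f_4^{-1}$. Then $B_0(G)\neq 0$. In case (a), moreover $G/[G,G]\cong C_3\times C_3$.
   Context: $[g,h]=g^{-1}h^{-1}gh$; $Z(G)$ is the center. $B_0(G)=\bigcap_A \ker\{\mathrm{res}^G_A : H^2(G,\mathbb{Q}/\mathbb{Z})\to H^2(A,\mathbb{Q}/\mathbb{Z})\}$, where $A$ runs over all bicyclic subgroups of $G$ (cyclic groups or direct products of two cyclic groups), with trivial action on $\mathbb{Q}/\mathbb{Z}$. (These are the groups numbered 28, 29, 30 among groups of order 243 in the GAP SmallGroups library.) *)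

From HB Require Import structures.
From mathcomp Require Import all_boot all_order all_algebra all_fingroup all_solvable.
Set Implicit Arguments. Unset Strict Implicit. Unset Printing Implicit Defensive.
Import GRing.Theory Num.Theory.

Local Open Scope group_scope.

(* Q/Z is modelled as rat modulo the integers: [eqQZ a b] means a = b in Q/Z. *)
Definition eqQZ (a b : rat) : Prop := ((a - b)%R \is a Num.int).

(* A normalised-or-not 2-cochain with values in Q/Z is a function gT -> gT -> rat
   (only its values on the relevant subgroup matter).  Trivial action. *)
Definition cocycle2 (gT : finGroupType) (G : {set gT}) (c : gT -> gT -> rat) : Prop :=
  forall x y z, x \in G -> y \in G -> z \in G ->
    eqQZ (c y z - c (x * y)%g z + c x (y * z)%g - c x y)%R 0%R.

Definition coboundary2 (gT : finGroupType) (A : {set gT}) (c : gT -> gT -> rat) : Prop :=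
  exists f : gT -> rat, forall x y, x \in A -> y \in A ->
    eqQZ (c x y) (f y - f (x * y)%g + f x)%R.

(* bicyclic subgroup: cyclic or a direct product of two cyclic groups,
   i.e. an abelian group generated by (at most) two elements. *)
Definition bicyclic (gT : finGroupType) (A : {set gT}) : Prop :=
  abelian A /\ exists x y : gT, A = <<[set x; y]>>.

(* B_0(G) <> 0: some class in H^2(G,Q/Z) is nonzero but restricts to zero on
   every bicyclic subgroup of G.  (Restriction = restriction of the cocycle.) *)
Definition B0_nontrivial (gT : finGroupType) (G : {group gT}) : Prop :=
  exists c : gT -> gT -> rat,
    [/\ cocycle2 G c, ~ coboundary2 G c &
        forall A : {group gT}, A \subset G -> bicyclic A -> coboundary2 A c].

(* We exhibit a 2-cocycle beta with values in (1/3)Z/Z, inflated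
   from the Heisenberg quotient G / <f4, f5>:
       beta(x, y) = (b c' + C(b, 2) a') / 3,
   where f1^a f2^b f3^c f4^d f5^e is the normal form of x (primed for y).
   (1) On every commuting pair, beta agrees with the coboundary of an explicit
       function phi, so beta restricts to a coboundary on every abelian, in
       particular every bicyclic, subgroup.
   (2) For any coboundary c = dF, the "commutator defect"
       c(yx, [x, y]) + c(y, x) - c(x, y) equals F([x, y]) modulo Z.  But
       f5 = [f4, f1] = [f3, f2], while the defects of beta at (f4, f1) and
       (f3, f2) are 0 and 1/3; so beta is not a coboundary. *)

From HB Require Import structures.
From mathcomp Require Import all_boot all_order all_algebra all_fingroup all_solvable.
From mathcomp Require Import zify ring.
Set Implicit Arguments. Unset Strict Implicit. Unset Printing Implicit Defensive.
Import GRing.Theory Num.Theory.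

Section RationalsModuloIntegers.

Local Open Scope ring_scope.

Lemma eqQZ_sym a b : eqQZ a b -> eqQZ b a.
Proof. by rewrite /eqQZ -opprB rpredN. Qed.

Lemma eqQZ_trans a b c : eqQZ a b -> eqQZ b c -> eqQZ a c.
Proof. by rewrite /eqQZ => ab bc; rewrite -[a](subrK b) -addrA rpredD. Qed.

Lemma eqQZ_add a b a' b' : eqQZ a a' -> eqQZ b b' -> eqQZ (a + b) (a' + b').
Proof. by rewrite /eqQZ opprD addrACA; apply: rpredD. Qed.

Lemma eqQZ_sub a b a' b' : eqQZ a a' -> eqQZ b b' -> eqQZ (a - b) (a' - b').
Proof.
move=> aa' bb'; apply: eqQZ_add aa' _.
by rewrite /eqQZ (_ : - b - - b' = - (b - b')) ?rpredN //; ring.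
Qed.

Lemma eqQZ_frac (d m n : nat) : m = n %[mod d] -> eqQZ (m%:R / d%:R) (n%:R / d%:R).
Proof.
move=> Emn; rewrite /eqQZ (divn_eq m d) (divn_eq n d) Emn.
have [->|d_gt0] := posnP d; first by rewrite invr0 !mulr0 subrr.
have d_neq0 : (d%:R : rat) != 0 by rewrite pnatr_eq0 -lt0n.
set r := ((n %% d)%N%:R : rat); rewrite !natrD !natrM.
have -> : ((m %/ d)%:R * d%:R + r) / d%:R - ((n %/ d)%:R * d%:R + r) / d%:R
          = (m %/ d)%N%:R - (n %/ d)%N%:R :> rat by field.
by rewrite rpredB ?natr_int.
Qed.

Lemma int_frac_dcochain (d m1 m2 n1 n2 : nat) : (m1 + m2 = n1 + n2 %[mod d])%N ->
  (m1%:R / d%:R - n1%:R / d%:R + m2%:R / d%:R - n2%:R / d%:R : rat) \is a Num.int.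
Proof.
move/eqQZ_frac; rewrite /eqQZ !natrD.
by rewrite (_ : _ - _ = m1%:R / d%:R - n1%:R / d%:R + m2%:R / d%:R - n2%:R / d%:R) //; ring.
Qed.

Lemma eqQZ_frac_coboundary (d m p q r : nat) : (m + p = q + r %[mod d])%N ->
  eqQZ (m%:R / d%:R) (r%:R / d%:R - p%:R / d%:R + q%:R / d%:R).
Proof.
move/eqQZ_frac; rewrite /eqQZ !natrD.
by rewrite (_ : _ - _ = m%:R / d%:R - (r%:R / d%:R - p%:R / d%:R + q%:R / d%:R)) //; ring.
Qed.

End RationalsModuloIntegers.

Section Cochains.

Local Open Scope group_scope.

Variables (gT : finGroupType) (G : {group gT}) (c : gT -> gT -> rat).

Lemma gen_sub_right_closed (S A : {set gT}) :
  1 \in A -> (forall a s, a \in A -> s \in S -> a * s \in A) -> <<S>> \subset A.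
Proof.
move=> A1 AS.
pose K := [set g | [forall a in A, a * g \in A]].
have gK : group_set K.
  apply/group_setP; split; first by rewrite inE; apply/forall_inP => a; rewrite mulg1.
  move=> g h; rewrite !inE => /forall_inP Kg /forall_inP Kh.
  by apply/forall_inP => a Aa; rewrite mulgA Kh ?Kg.
have sSK : <<S>> \subset Group gK.
  rewrite gen_subG; apply/subsetP => s Ss.
  by rewrite inE; apply/forall_inP => a Aa; apply: AS.
apply/subsetP => g /(subsetP sSK); rewrite inE => /forall_inP/(_ 1 A1).
by rewrite mul1g.
Qed.

Definition dcochain (x y z : gT) : rat := (c y z - c (x * y)%g z + c x (y * z)%g - c x y)%R.

Lemma dcochainM x y w s :
  dcochain x y (w * s) =
  (dcochain y w s - dcochain (x * y)%g w s + dcochain x (y * w)%g s + dcochain x y w)%R.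
Proof. by rewrite /dcochain !mulgA; ring. Qed.

Lemma cocycle2_from_generators (S : {set gT}) :
  G :=: <<S>> -> {in G, forall x, c x 1 = 0%R} ->
  (forall x y s, x \in G -> y \in G -> s \in S -> dcochain x y s \is a Num.int) ->
  cocycle2 G c.
Proof.
move=> defG c_1 cS.
have sSG : S \subset G by rewrite defG subset_gen.
pose A := [set w in G | [forall x in G, [forall y in G, dcochain x y w \is a Num.int]]].
have sGA : G \subset A.
  rewrite {1}defG; apply: gen_sub_right_closed => [|w s].
    rewrite inE group1; apply/forall_inP => x Gx; apply/forall_inP => y Gy.
    by rewrite /dcochain !mulg1 !c_1 ?groupM // subrr add0r subrr rpred0.
  rewrite !inE => /andP[Gw /forall_inP Aw] Ss; have Gs := subsetP sSG s Ss.
  rewrite groupM //; apply/forall_inP => x Gx; apply/forall_inP => y Gy.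
  have Awxy := forall_inP (Aw x Gx) y Gy.
  rewrite dcochainM; apply: rpredD Awxy.
  by apply: rpredD; [apply: rpredB|]; apply: cS; rewrite ?groupM.
move=> x y z Gx Gy Gz; rewrite /eqQZ subr0.
have /subsetP/(_ z Gz) := sGA; rewrite inE => /andP[_ /forall_inP/(_ x Gx)].
by move/forall_inP/(_ y Gy).
Qed.

Lemma coboundary2_abelian (f : gT -> rat) :
  (forall x y, x \in G -> y \in G -> commute x y ->
     eqQZ (c x y) (f y - f (x * y)%g + f x)%R) ->
  forall A : {group gT}, A \subset G -> abelian A -> coboundary2 A c.
Proof.
move=> cf A sAG cAA; exists f => x y Ax Ay.
by apply: cf; rewrite ?(subsetP sAG) //; apply: (centsP cAA).
Qed.

(* If c = dF modulo Z, then the commutator defect of c at (x, y) equals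
   F [~ x, y] modulo Z; hence it only depends on the commutator [~ x, y]. *)
Definition comm_defect (x y : gT) : rat := (c (y * x)%g [~ x, y] + c y x - c x y)%R.

Lemma comm_defect_coboundary x y u v :
  coboundary2 G c -> x \in G -> y \in G -> u \in G -> v \in G ->
  [~ x, y] = [~ u, v] -> eqQZ (comm_defect x y) (comm_defect u v).
Proof.
case=> F cF.
have defect_F a b : a \in G -> b \in G -> eqQZ (comm_defect a b) (F [~ a, b]).
  move=> Ga Gb; have Gba := groupM Gb Ga.
  have := eqQZ_sub (eqQZ_add (cF _ _ Gba (groupR Ga Gb)) (cF _ _ Gb Ga)) (cF _ _ Ga Gb).
  rewrite -commgC; move: (F [~ a, b]) (F (a * b)) (F (b * a)) (F a) (F b) => r1 r2 r3 r4 r5.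
  by rewrite (_ : (r1 - r2 + r3 + (r4 - r3 + r5) - (r5 - r2 + r4))%R = r1) //; ring.
move=> Gx Gy Gu Gv Exy; apply: eqQZ_trans (defect_F _ _ Gx Gy) _.
by rewrite Exy; apply/eqQZ_sym/defect_F.
Qed.

Lemma B0_nontrivial_criterion (f : gT -> rat) (x y u v : gT) :
  cocycle2 G c ->
  (forall a b, a \in G -> b \in G -> commute a b ->
     eqQZ (c a b) (f b - f (a * b)%g + f a)%R) ->
  x \in G -> y \in G -> u \in G -> v \in G -> [~ x, y] = [~ u, v] ->
  ~ eqQZ (comm_defect x y) (comm_defect u v) ->
  B0_nontrivial G.
Proof.
move=> cocycle_c comm_c Gx Gy Gu Gv Exy defect_neq; exists c; split => //.
  by move/comm_defect_coboundary=> /(_ x y u v Gx Gy Gu Gv Exy).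
by move=> A sAG [cAA _]; apply: coboundary2_abelian comm_c A sAG cAA.
Qed.

End Cochains.

(* Exponent vectors (a, b, c, d, e) standing for f1^a f2^b f3^c f4^d f5^e,
   and the collection process computing normal forms. *)
Definition expvec := (nat * nat * nat * nat * nat)%type.

(* Power relations f1^3 = f5^k, f2^3 = f4^2, f3^3 = f5^2, f4^3 = f5^3 = 1:
   reduce every exponent modulo 3, carrying the excess to f4 and f5. *)
Definition nf_reduce (k : nat) (t : expvec) : expvec :=
  let: (a, b, c, d, e) := t in
  (a %% 3, b %% 3, c %% 3, (d + 2 * (b %/ 3)) %% 3,
   (e + k * (a %/ 3) + 2 * (c %/ 3)) %% 3).

(* Right multiplication of a word by f1, ..., f5 before reduction; for f1
   this uses f2^f1 = f2 f3, f3^f1 = f3 f4, f4^f1 = f4 f5, [f3, f2] = f5. *)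
Definition rmul1 (t : expvec) : expvec :=
  let: (a, b, c, d, e) := t in (a.+1, b, b + c, c + d, e + d + 'C(b, 2)).
Definition rmul2 (t : expvec) : expvec :=
  let: (a, b, c, d, e) := t in (a, b.+1, c, d, e + c).
Definition rmul3 (t : expvec) : expvec :=
  let: (a, b, c, d, e) := t in (a, b, c.+1, d, e).
Definition rmul4 (t : expvec) : expvec :=
  let: (a, b, c, d, e) := t in (a, b, c, d.+1, e).
Definition rmul5 (t : expvec) : expvec :=
  let: (a, b, c, d, e) := t in (a, b, c, d, e.+1).

Definition nf_mul (k : nat) (t u : expvec) : expvec :=
  let: (a, b, c, d, e) := u in
  iter e (nf_reduce k \o rmul5) (iter d (nf_reduce k \o rmul4)
    (iter c (nf_reduce k \o rmul3) (iter b (nf_reduce k \o rmul2)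
      (iter a (nf_reduce k \o rmul1) t)))).

Definition reduced (t : expvec) : bool :=
  let: (a, b, c, d, e) := t in [&& a < 3, b < 3, c < 3, d < 3 & e < 3].

Definition digits3 (i : nat) : expvec :=
  (i %/ 81, i %/ 27 %% 3, i %/ 9 %% 3, i %/ 3 %% 3, i %% 3).
Definition nforms : seq expvec := map digits3 (iota 0 243).

Lemma mem_nforms t : (t \in nforms) = reduced t.
Proof.
case: t => [[[[a b] c] d] e]; apply/mapP/idP => [[i]|].
  by rewrite mem_iota => /andP[_ lti] [-> -> -> -> ->] /=; apply/and5P; split; lia.
move=> /and5P[]; exists (a * 81 + b * 27 + c * 9 + d * 3 + e).
  by rewrite mem_iota; lia.
by rewrite /digits3; congr (_, _, _, _, _); lia.
Qed.

Lemma size_nforms : size nforms = 243.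
Proof. by rewrite size_map size_iota. Qed.

Lemma reduced_nf_reduce k t : reduced (nf_reduce k t).
Proof. by case: t => [[[[a b] c] d] e]; rewrite /= !ltn_pmod. Qed.

Lemma reduced_nf_mul k t u : reduced t -> reduced (nf_mul k t u).
Proof.
have iterP (s : expvec -> expvec) n v : reduced v -> reduced (iter n (nf_reduce k \o s) v).
  by case: n => //= n; rewrite reduced_nf_reduce.
by case: u => [[[[a b] c] d] e] red_t; rewrite /= !iterP.
Qed.

(* The cochain numerators (over the denominator 9) of the cocycle
   beta(x, y) = (b c' + C(b, 2) a') / 3, where x ~ (a, b, c, d, e) and
   y ~ (a', b', c', d', e'), and of the function phi whose coboundary agrees
   with beta on commuting pairs.  Both were found by solving the linear
   conditions below over Z/9; beta only depends on the image of x and y in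
   the Heisenberg quotient G / <f4, f5>. *)
Definition beta_num (t u : expvec) : nat :=
  let: (_, b, _, _, _) := t in let: (a', _, c', _, _) := u in 3 * (b * c' + 'C(b, 2) * a').

Definition phi_num (t : expvec) : nat :=
  let: (a, b, c, _, _) := t in
  3 * b * c + 7 * a * b + 2 * a * 'C(b, 2) + 3 * 'C(a, 2) * 'C(b, 2).

Definition gen_vecs : seq expvec :=
  [:: (1, 0, 0, 0, 0); (0, 1, 0, 0, 0); (0, 0, 1, 0, 0); (0, 0, 0, 1, 0); (0, 0, 0, 0, 1)].

Definition cocycle_check (k : nat) : bool :=
  all (fun t => all (fun u => all (fun s =>
    beta_num u s + beta_num t (nf_mul k u s) == beta_num (nf_mul k t u) s + beta_num t u %[mod 9])
  gen_vecs) nforms) nforms.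

Definition commuting_check (k : nat) : bool :=
  all (fun t => all (fun u => (nf_mul k t u == nf_mul k u t) ==>
    (beta_num t u + phi_num (nf_mul k t u) == phi_num t + phi_num u %[mod 9]))
  nforms) nforms.

Definition nf_ab (t : expvec) : nat * nat := let: (a, b, _, _, _) := t in (a, b).
Definition abelian_check (k : nat) : bool :=
  all (fun t => all (fun u =>
    nf_ab (nf_mul k t u) == (((nf_ab t).1 + (nf_ab u).1) %% 3, ((nf_ab t).2 + (nf_ab u).2) %% 3))
  nforms) nforms.

Definition presentation_check (k : nat) : bool :=
  [&& cocycle_check k, commuting_check k & abelian_check k].

Lemma presentation_check_ok k : k < 3 -> presentation_check k.
Proof.
case: k => [|[|[|k]]] lt_k3; [by vm_compute.. | exfalso].
by rewrite !ltnS ltn0 in lt_k3.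
Qed.

Section Presentation.

Local Open Scope group_scope.

Variables (gT : finGroupType) (G : {group gT}) (f1 f2 f3 f4 f5 : gT) (k : nat).

Hypothesis defG : G :=: <<[set f1; f2; f3; f4; f5]>>.
Hypothesis Zf5 : f5 \in 'Z(G).
Hypotheses (C21 : [~ f2, f1] = f3) (C31 : [~ f3, f1] = f4) (C41 : [~ f4, f1] = f5)
  (C32 : [~ f3, f2] = f5) (C42 : [~ f4, f2] = 1) (C43 : [~ f4, f3] = 1).
Hypotheses (P1 : f1 ^+ 3 = f5 ^+ k) (P2 : f2 ^+ 3 = f4 ^+ 2) (P3 : f3 ^+ 3 = f5 ^+ 2)
  (P4 : f4 ^+ 3 = 1) (P5 : f5 ^+ 3 = 1).

Lemma gens_in_G : [set f1; f2; f3; f4; f5] \subset G.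
Proof. by rewrite defG subset_gen. Qed.

Let Gf1 : f1 \in G. Proof. by rewrite (subsetP gens_in_G) // !inE eqxx. Qed.
Let Gf2 : f2 \in G. Proof. by rewrite (subsetP gens_in_G) // !inE eqxx !orbT. Qed.
Let Gf3 : f3 \in G. Proof. by rewrite (subsetP gens_in_G) // !inE eqxx !orbT. Qed.
Let Gf4 : f4 \in G. Proof. by rewrite (subsetP gens_in_G) // !inE eqxx !orbT. Qed.
Let Gf5 : f5 \in G. Proof. by rewrite (subsetP gens_in_G) // !inE eqxx !orbT. Qed.

Let cf5 x m n : x \in G -> commute (f5 ^+ m) (x ^+ n).
Proof. by move=> Gx; apply: commuteX2; case/centerP: Zf5 => _; apply. Qed.
Let cf4f3 m n : commute (f4 ^+ m) (f3 ^+ n).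
Proof. by apply/commuteX2/commgP; rewrite C43. Qed.
Let cf4f2 : commute f4 f2. Proof. by apply/commgP; rewrite C42. Qed.

Let mulgACr (x y z : gT) : commute y z -> x * y * z = x * z * y.
Proof. by move=> cyz; rewrite -mulgA cyz mulgA. Qed.

Definition word (t : expvec) : gT :=
  let: (a, b, c, d, e) := t in f1 ^+ a * f2 ^+ b * f3 ^+ c * f4 ^+ d * f5 ^+ e.

Lemma word_nf_reduce t : word t = word (nf_reduce k t).
Proof.
have expg_mod3 (x : gT) n : x ^+ n = x ^+ (n %% 3) * (x ^+ 3) ^+ (n %/ 3).
  by rewrite -expgM mulnC -expgD addnC -divn_eq.
have expg_mod3_1 (x : gT) n : x ^+ 3 = 1 -> x ^+ n = x ^+ (n %% 3).
  by move=> x3; rewrite expg_mod3 x3 expg1n mulg1.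
case: t => [[[[a b] c] d] e] /=.
rewrite -(expg_mod3_1 f4 _ P4) -(expg_mod3_1 f5 _ P5).
rewrite [f1 ^+ a]expg_mod3 [f2 ^+ b]expg_mod3 [f3 ^+ c]expg_mod3 P1 P2 P3 -!expgM.
move: (2 * (b %/ 3))%N (k * (a %/ 3))%N (2 * (c %/ 3))%N => u v w.
rewrite !expgD !mulgA.
rewrite (mulgACr _ (cf5 v (b %% 3) Gf2)) (mulgACr _ (cf5 v u Gf4)).
rewrite (mulgACr _ (cf5 v (c %% 3) Gf3)) (mulgACr _ (cf4f3 u (c %% 3))).
rewrite (mulgACr _ (cf5 w d Gf4)) (mulgACr _ (cf5 v d Gf4)).
rewrite (mulgACr _ (commuteX2 u d (commute_refl f4))).
by rewrite (mulgACr _ (cf5 w e Gf5)) (mulgACr _ (cf5 v e Gf5)).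
Qed.

Lemma word_rmul5 t : word t * f5 = word (rmul5 t).
Proof. by case: t => [[[[a b] c] d] e] /=; rewrite -mulgA -expgSr. Qed.

Lemma word_rmul4 t : word t * f4 = word (rmul4 t).
Proof.
case: t => [[[[a b] c] d] e] /=.
by rewrite (mulgACr _ (cf5 e 1 Gf4)) -(mulgA _ (f4 ^+ d)) -expgSr.
Qed.

Lemma word_rmul3 t : word t * f3 = word (rmul3 t).
Proof.
case: t => [[[[a b] c] d] e] /=.
rewrite (mulgACr _ (cf5 e 1 Gf3)) (mulgACr _ (cf4f3 d 1)).
by rewrite -(mulgA _ (f3 ^+ c)) -expgSr.
Qed.

Lemma word_rmul2 t : word t * f2 = word (rmul2 t).
Proof.
case: t => [[[[a b] c] d] e] /=.
rewrite (mulgACr _ (cf5 e 1 Gf2)) (mulgACr _ (commuteX2 d 1 cf4f2)).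
have f3f2 : f3 ^ f2 = f3 * f5 by rewrite conjg_mulR C32.
rewrite -(mulgA _ (f3 ^+ c)) (conjgC (f3 ^+ c) f2) conjXg f3f2.
rewrite expgMn; last exact: commute_sym (cf5 1 1 Gf3).
rewrite !mulgA -(mulgA _ (f2 ^+ b)) -expgSr (mulgACr _ (cf5 c d Gf4)).
by rewrite -(mulgA _ (f5 ^+ c)) -expgD addnC.
Qed.

Lemma word_rmul1 t : word t * f1 = word (rmul1 t).
Proof.
case: t => [[[[a b] c] d] e] /=.
have conj_f1 x y : [~ x, f1] = y -> x ^ f1 = x * y by move=> Cxy; rewrite conjg_mulR Cxy.
have f5f1 : f5 ^ f1 = f5 by rewrite (conj_f1 f5 1) ?mulg1 //; apply/eqP/commgP/(cf5 1 1 Gf1).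
have -> : f1 ^+ a * f2 ^+ b * f3 ^+ c * f4 ^+ d * f5 ^+ e * f1 =
    f1 ^+ a.+1 * ((f2 ^+ b) ^ f1 * (f3 ^+ c) ^ f1 * (f4 ^+ d) ^ f1 * (f5 ^+ e) ^ f1).
  have shift (X : gT) : f1 ^+ a * X * f1 = f1 ^+ a.+1 * X ^ f1.
    by rewrite expgSr -!mulgA -conjgC.
  by rewrite -!conjMg -shift !mulgA.
rewrite !conjXg (conj_f1 _ _ C21) (conj_f1 _ _ C31) (conj_f1 _ _ C41) f5f1.
have cf5f3 : commute f3 [~ f3, f2] by rewrite C32; exact: commute_sym (cf5 1 1 _).
have cf5f2 : commute f2 [~ f3, f2] by rewrite C32; exact: commute_sym (cf5 1 1 _).
rewrite expMg_Rmul // C32 expgMn; last exact: commute_sym (cf4f3 1 1).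
rewrite expgMn; last exact: commute_sym (cf5 1 1 Gf4).
rewrite !mulgA; set C := 'C(b, 2).
rewrite (mulgACr _ (cf5 C c Gf3)) (mulgACr _ (cf5 C c Gf4)).
rewrite (mulgACr _ (cf5 C d Gf4)) (mulgACr _ (cf5 C d Gf5)).
rewrite (mulgACr _ (cf5 C e Gf5)) (mulgACr _ (cf5 d e Gf5)).
rewrite -(mulgA _ (f3 ^+ b)) -expgD -(mulgA _ (f4 ^+ c)) -expgD.
by rewrite -(mulgA _ (f5 ^+ e)) -expgD -(mulgA _ (f5 ^+ (e + d))) -expgD.
Qed.

Lemma word_mul t u : word t * word u = word (nf_mul k t u).
Proof.
have word_iter (x : gT) (s : expvec -> expvec) n v :
    (forall v, word v * x = word (s v)) ->
    word v * x ^+ n = word (iter n (nf_reduce k \o s) v).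
  move=> ws; elim: n => [|n IHn]; first by rewrite mulg1.
  by rewrite expgSr mulgA IHn ws -word_nf_reduce.
case: u => [[[[a b] c] d] e] /=; rewrite !mulgA.
by rewrite !(word_iter _ _ _ _ word_rmul1, word_iter _ _ _ _ word_rmul2,
  word_iter _ _ _ _ word_rmul3, word_iter _ _ _ _ word_rmul4, word_iter _ _ _ _ word_rmul5).
Qed.

Lemma word_in_G t : word t \in G.
Proof. by case: t => [[[[a b] c] d] e]; rewrite !groupM ?groupX. Qed.

Definition nwords : seq gT := map word nforms.

Hypothesis cardG : #|G| = 243%N.

(* Every element of G is a normal word: the normal words contain 1 and are
   stable under right multiplication by the generators. *)
Lemma G_sub_nwords : G \subset [set x in nwords].
Proof.
rewrite {1}defG; apply: gen_sub_right_closed => [|x s].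
  by rewrite in_set (_ : 1 = word (0, 0, 0, 0, 0)%N) ?map_f ?mem_nforms // /= !mulg1.
rewrite in_set => /mapP[t _ ->]; rewrite !in_setU !in_set1 in_set.
have collect y (r : expvec -> expvec) : word t * y = word (r t) -> word t * y \in nwords.
  by move=> ->; rewrite word_nf_reduce map_f // mem_nforms reduced_nf_reduce.
move=> /orP[/orP[/orP[/orP[]|]|]|] /eqP ->; apply: collect; first
  [exact: word_rmul1 | exact: word_rmul2 | exact: word_rmul3 | exact: word_rmul4 | exact: word_rmul5].
Qed.

(* Since #|G| = 243 = size nforms, the normal form of an element is unique. *)
Lemma uniq_nwords : uniq nwords.
Proof.
apply/card_uniqP/eqP; rewrite eqn_leq card_size size_map size_nforms -{1}cardG.
by rewrite (leq_trans (subset_leq_card G_sub_nwords)) // cardsE.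
Qed.

(* The exponent vector of the normal form of x; it is locked so that
   unification never tries to evaluate it. *)
Fact expo_key : unit. Proof. by []. Qed.
Definition expo : gT -> expvec :=
  locked_with expo_key (fun x => nth (0, 0, 0, 0, 0)%N nforms (index x nwords)).
Lemma expoE x : expo x = nth (0, 0, 0, 0, 0)%N nforms (index x nwords).
Proof. by rewrite /expo locked_withE. Qed.

Lemma mem_nwords x : x \in G -> x \in nwords.
Proof. by move=> /(subsetP G_sub_nwords); rewrite in_set. Qed.

Lemma index_nwords x : x \in G -> (index x nwords < 243)%N.
Proof. by move=> Gx; rewrite -size_nforms -(size_map word) index_mem mem_nwords. Qed.

Lemma reduced_expo x : x \in G -> reduced (expo x).
Proof. by move=> Gx; rewrite -mem_nforms expoE mem_nth ?size_nforms ?index_nwords. Qed.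

Lemma expoK x : x \in G -> word (expo x) = x.
Proof.
move=> Gx; rewrite expoE -(nth_map _ (word (0, 0, 0, 0, 0)%N)) ?size_nforms ?index_nwords //.
by rewrite nth_index ?mem_nwords.
Qed.

Lemma wordK t : reduced t -> expo (word t) = t.
Proof.
rewrite -mem_nforms => nf_t; rewrite expoE -(nth_index (0, 0, 0, 0, 0)%N nf_t).
rewrite -(nth_map _ (word (0, 0, 0, 0, 0)%N)) ?index_mem //.
by rewrite index_uniq ?uniq_nwords // size_map index_mem.
Qed.

Lemma expoM x y : x \in G -> y \in G -> expo (x * y) = nf_mul k (expo x) (expo y).
Proof.
move=> Gx Gy; rewrite -{1}(expoK Gx) -{1}(expoK Gy) word_mul wordK //.
by rewrite reduced_nf_mul ?reduced_expo.
Qed.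

Hypothesis checks : presentation_check k.

Lemma expo_eq t x : word t = x -> reduced t -> expo x = t.
Proof. by move=> <-; apply: wordK. Qed.

Lemma expo1 : expo 1 = (0, 0, 0, 0, 0)%N.
Proof. by apply: expo_eq; [rewrite /word !mulg1 | exact: isT]. Qed.

Lemma expo_gens :
  [/\ expo f1 = (1, 0, 0, 0, 0), expo f2 = (0, 1, 0, 0, 0), expo f3 = (0, 0, 1, 0, 0),
      expo f4 = (0, 0, 0, 1, 0) & expo f5 = (0, 0, 0, 0, 1)]%N.
Proof.
by split; (apply: expo_eq; last exact: isT); rewrite /word ?expg1 ?expg0 ?mulg1 ?mul1g.
Qed.

Definition beta (x y : gT) : rat := ((beta_num (expo x) (expo y))%:R / 9%:R)%R.
Definition phi (x : gT) : rat := ((phi_num (expo x))%:R / 9%:R)%R.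

Let nforms_expo x : x \in G -> expo x \in nforms.
Proof. by move=> Gx; rewrite mem_nforms reduced_expo. Qed.

Lemma beta_cocycle : cocycle2 G beta.
Proof.
have /and3P[/allP cocycle_ok _ _] := checks.
apply: (cocycle2_from_generators defG) => [x Gx | x y s Gx Gy gen_s].
  rewrite /beta expo1; case: (expo x) => [[[[a b] c] d] e].
  by rewrite [beta_num _ _]/= !muln0 mul0r.
have Gs := subsetP gens_in_G s gen_s.
have vec_s : expo s \in gen_vecs.
  case: expo_gens => E1 E2 E3 E4 E5; move: gen_s; rewrite !in_setU !in_set1.
  by move=> /orP[/orP[/orP[/orP[]|]|]|] /eqP ->; rewrite ?E1 ?E2 ?E3 ?E4 ?E5; exact: isT.
have := allP (allP (cocycle_ok _ (nforms_expo Gx)) _ (nforms_expo Gy)) _ vec_s.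
rewrite -(expoM Gx Gy) -(expoM Gy Gs) => /eqP cong.
by rewrite /dcochain /beta; apply: int_frac_dcochain.
Qed.

Lemma beta_commuting x y : x \in G -> y \in G -> commute x y ->
  eqQZ (beta x y) (phi y - phi (x * y)%g + phi x)%R.
Proof.
move=> Gx Gy cxy; have /and3P[_ /allP commuting_ok _] := checks.
have := allP (commuting_ok _ (nforms_expo Gx)) _ (nforms_expo Gy).
rewrite -(expoM Gx Gy) -(expoM Gy Gx) -cxy eqxx implyTb => /eqP cong.
by rewrite /beta /phi; apply: eqQZ_frac_coboundary.
Qed.

(* f5 is both [~ f4, f1] and [~ f3, f2], but the commutator defects of beta
   at these two pairs are 0 and 1/3. *)
Lemma comm_defect_beta : ~ eqQZ (comm_defect beta f4 f1) (comm_defect beta f3 f2).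
Proof.
case: expo_gens => E1 E2 E3 E4 E5.
rewrite /comm_defect C41 C32 /beta (expoM Gf1 Gf4) (expoM Gf2 Gf3) E1 E2 E3 E4 E5.
by vm_compute.
Qed.

Theorem B0_presentation : B0_nontrivial G.
Proof.
apply: (B0_nontrivial_criterion beta_cocycle beta_commuting Gf4 Gf1 Gf3 Gf2 _ comm_defect_beta).
by rewrite C41 C32.
Qed.

Definition ab_coord (x : gT) : 'Z_3 * 'Z_3 := let: (a, b) := nf_ab (expo x) in (a%:R, b%:R)%R.

Let Zp3_mod n : ((n %% 3)%:R : 'Z_3)%R = n%:R%R.
Proof. by rewrite !Zp_nat; apply: val_inj; rewrite /= modn_mod. Qed.

Let Zp3_nat_eq0 n : (n%:R : 'Z_3)%R = 0%R -> (n < 3)%N -> n = 0%N.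
Proof. by move=> /(congr1 val) + lt_n3; rewrite Zp_nat /= modn_small. Qed.

Lemma ab_coordM : {in G &, {morph ab_coord : x y / x * y}}.
Proof.
move=> x y Gx Gy; have /and3P[_ _ /allP ab_ok] := checks.
have /eqP := allP (ab_ok _ (nforms_expo Gx)) _ (nforms_expo Gy).
rewrite -(expoM Gx Gy) /ab_coord => ->.
by case: (nf_ab (expo x)) => a b; case: (nf_ab (expo y)) => a' b'; rewrite !Zp3_mod !natrD.
Qed.

Definition ab_morphism : {morphism G >-> 'Z_3 * 'Z_3} := Morphism ab_coordM.

Lemma ker_ab_morphism : 'ker ab_morphism = [~: G, G].
Proof.
apply/eqP; rewrite eqEsubset; apply/andP; split; last first.
  rewrite gen_subG; apply/subsetP => _ /imset2P[x y Gx Gy ->].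
  apply/(kerP _ (groupR Gx Gy)); rewrite (morphR _ Gx Gy); apply/eqP/commgP.
  by case: (ab_morphism x) (ab_morphism y) => [u1 u2] [v1 v2]; congr pair; apply: addrC.
apply/subsetP => x ker_x; have Gx := dom_ker ker_x.
suff: word (expo x) \in [~: G, G] by rewrite expoK.
move: (mker ker_x) (reduced_expo Gx); rewrite [ab_morphism x]/= /ab_coord.
case: (expo x) => [[[[a b] c] d] e] [/Zp3_nat_eq0 a0 /Zp3_nat_eq0 b0] /and5P[/a0 -> /b0 -> _ _ _].
have G'f3 : f3 \in [~: G, G] by rewrite -C21; exact: mem_commg Gf2 Gf1.
have G'f4 : f4 \in [~: G, G] by rewrite -C31; exact: mem_commg Gf3 Gf1.
have G'f5 : f5 \in [~: G, G] by rewrite -C41; exact: mem_commg Gf4 Gf1.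
rewrite /word !expg0 !mul1g.
exact: groupM (groupM (groupX c G'f3) (groupX d G'f4)) (groupX e G'f5).
Qed.

Lemma im_ab_morphism : ab_morphism @* G = [set: 'Z_3 * 'Z_3].
Proof.
apply/eqP; rewrite eqEsubset subsetT; apply/subsetP => -[u v] _.
have red : reduced (nat_of_ord u, nat_of_ord v, 0, 0, 0)%N by rewrite /= !ltn_ord.
rewrite morphimEdom; apply/imsetP.
exists (word (nat_of_ord u, nat_of_ord v, 0, 0, 0)%N); first exact: word_in_G.
by rewrite [ab_morphism _]/= /ab_coord (wordK red) /= !natr_Zp.
Qed.

Theorem abelianization_presentation : (G / [~: G, G]) \isog [set: 'Z_3 * 'Z_3].
Proof. by rewrite -ker_ab_morphism -im_ab_morphism; apply: first_isog. Qed.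

End Presentation.

Local Open Scope group_scope.

Theorem mainTheorem5 (gT : finGroupType) (G : {group gT}) (f1 f2 f3 f4 f5 : gT) :
  #|G| = (3 ^ 5)%N ->
  G :=: <<[set f1; f2; f3; f4; f5]>> ->
  f5 \in 'Z(G) ->
  [~ f2, f1] = f3 ->
  [~ f3, f1] = f4 ->
  [~ f4, f1] = f5 ->
  [~ f3, f2] = f5 ->
  [~ f4, f2] = 1 ->
  [~ f4, f3] = 1 ->
  (* case (a) *)
  [/\ f1 ^+ 3 = 1, f4 ^+ 3 = 1, f5 ^+ 3 = 1, f2 ^+ 3 = f4^-1 & f3 ^+ 3 = f5^-1]
  (* case (b) *)
  \/ [/\ f4 ^+ 3 = 1, f5 ^+ 3 = 1, f1 ^+ 3 = f5, f2 ^+ 3 = f4^-1 & f3 ^+ 3 = f5^-1]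
  (* case (c) *)
  \/ [/\ f4 ^+ 3 = 1, f5 ^+ 3 = 1, f1 ^+ 3 = f5^-1, f3 ^+ 3 = f5^-1 & f2 ^+ 3 = f4^-1] ->
  B0_nontrivial G /\
  ([/\ f1 ^+ 3 = 1, f4 ^+ 3 = 1, f5 ^+ 3 = 1, f2 ^+ 3 = f4^-1 & f3 ^+ 3 = f5^-1] ->
   (G / [~: G, G]) \isog [set: 'Z_3 * 'Z_3]).
Proof.
move=> cardG defG Zf5 C21 C31 C41 C32 C42 C43 cases.
have card243 : #|G| = 243%N by rewrite cardG.
have inv3 (x : gT) : x ^+ 3 = 1 -> x^-1 = x ^+ 2.
  by move=> x3; apply/eqP; rewrite eq_invg_mul -expgS x3.
(* The three groups are the instances k = 0, 1, 2 of f1^3 = f5^k. *)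
have presented k : (k < 3)%N -> f1 ^+ 3 = f5 ^+ k -> f2 ^+ 3 = f4^-1 -> f3 ^+ 3 = f5^-1 ->
    f4 ^+ 3 = 1 -> f5 ^+ 3 = 1 ->
    B0_nontrivial G /\ (G / [~: G, G]) \isog [set: 'Z_3 * 'Z_3].
  move=> /presentation_check_ok ok P1 P2 P3 P4 P5.
  rewrite (inv3 _ P4) in P2; rewrite (inv3 _ P5) in P3.
  split; first exact: B0_presentation defG Zf5 C21 C31 C41 C32 C42 C43 P1 P2 P3 P4 P5 card243 ok.
  exact: abelianization_presentation defG Zf5 C21 C31 C41 C32 C42 C43 P1 P2 P3 P4 P5 card243 ok.
split; last first.
  by case=> P1 P4 P5 P2 P3; apply: (presented 0%N isT _ P2 P3 P4 P5).2; rewrite P1 expg0.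
case: cases => [[P1 P4 P5 P2 P3] | [[P4 P5 P1 P2 P3] | [P4 P5 P1 P3 P2]]].
- by apply: (presented 0%N isT _ P2 P3 P4 P5).1; rewrite P1 expg0.
- by apply: (presented 1%N isT _ P2 P3 P4 P5).1; rewrite P1 expg1.
by apply: (presented 2%N isT _ P2 P3 P4 P5).1; rewrite P1 inv3.
Qed.
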